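(* Let $X$ be a real Hilbert space, let $T\colon X\to X$ be nonexpansive, let $v:=P_{\overline{\operatorname{ran}}(\mathrm{Id}-T)}0$ and assume $v\in\operatorname{ran}(\mathrm{Id}-T)$. Let $y_0\in\operatorname{Fix}(v+T)$. Then: (i) $y_0-\mathbb R_+v\subseteq\operatorname{Fix}(v+T)$; (ii) $\operatorname{Fix}(v+T)-\mathbb R_+v=\operatorname{Fix}(v+T)$; (iii) $-\mathbb R_+v\subseteq\operatorname{rec}(\operatorname{Fix}(v+T))$; (iv) for all $n\in\mathbb N$, $T^ny_0=y_0-nv$; (v) $\left]-\infty,1\right]\cdot v+\operatorname{Fix}(T_{-v})\subseteq\operatorname{Fix}(v+T)$; in particular $\operatorname{Fix}(T_{-v})\subseteq\operatorname{Fix}(v+T)$; (vi) for every $x\in X$, the sequence $(T^nx+nv)_{n\in\mathbb N}$ is Fejér monotone with respect to both $\operatorname{Fix}(v+T)$ and $\operatorname{Fix}(T_{-v})$; (vii) if $x_0\in\operatorname{Fix}(T_{-v})$ and $x_n:=T^nx_0$, then $x_n=x_0-nv$ for all $n$ and $(x_n)_{n\in\mathbb N}$ lies in $\operatorname{Fix}(T_{-v})$.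
   Context: $\overline{\operatorname{ran}}(\mathrm{Id}-T)$ is the closure of the range of $\mathrm{Id}-T$; it is convex for nonexpansive $T$, so $v$ is well-defined (the infimal displacement vector, the unique element of minimal norm of that closed convex set). $T_{-v}x:=T(x+v)$ and $(v+T)x:=v+Tx$. $\operatorname{Fix}$ denotes the fixed point set. $\operatorname{rec}C=\{x: x+C\subseteq C\}$ is the recession cone. A sequence $(y_n)$ is Fejér monotone with respect to $C$ if $\|y_{n+1}-c\|\le\|y_n-c\|$ for all $c\in C$ and all $n$. *)

From Stdlib Require Import Reals.
Open Scope R_scope.
Set Implicit Arguments.

Record HilbertSpace := {
  carrier :> Type;
  vadd : carrier -> carrier -> carrier;
  vzero : carrier;
  vopp : carrier -> carrier;
  vscal : R -> carrier -> carrier;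
  inner : carrier -> carrier -> R;
  vadd_assoc : forall x y z, vadd x (vadd y z) = vadd (vadd x y) z;
  vadd_comm : forall x y, vadd x y = vadd y x;
  vadd_0 : forall x, vadd x vzero = x;
  vadd_opp : forall x, vadd x (vopp x) = vzero;
  vscal_1 : forall x, vscal 1 x = x;
  vscal_assoc : forall a b x, vscal a (vscal b x) = vscal (a * b) x;
  vscal_distr_v : forall a x y, vscal a (vadd x y) = vadd (vscal a x) (vscal a y);
  vscal_distr_r : forall a b x, vscal (a + b) x = vadd (vscal a x) (vscal b x);
  inner_sym : forall x y, inner x y = inner y x;
  inner_add_l : forall x y z, inner (vadd x y) z = inner x z + inner y z;
  inner_scal_l : forall a x y, inner (vscal a x) y = a * inner x y;
  inner_pos : forall x, 0 <= inner x x;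
  inner_def : forall x, inner x x = 0 -> x = vzero;
  complete : forall u : nat -> carrier,
    (forall eps, eps > 0 -> exists N, forall m n, (m >= N)%nat -> (n >= N)%nat ->
        sqrt (inner (vadd (u m) (vopp (u n))) (vadd (u m) (vopp (u n)))) < eps) ->
    exists l, forall eps, eps > 0 -> exists N, forall n, (n >= N)%nat ->
        sqrt (inner (vadd (u n) (vopp l)) (vadd (u n) (vopp l))) < eps
}.

Section Ops.
Variable X : HilbertSpace.

Definition vsub (x y : X) : X := vadd X x (vopp X y).
Definition norm (x : X) : R := sqrt (inner X x x).

Definition nonexpansive (T : X -> X) : Prop :=
  forall x y, norm (vsub (T x) (T y)) <= norm (vsub x y).

Definition ran_IdT (T : X -> X) (y : X) : Prop := exists x, y = vsub x (T x).

Definition closure (C : X -> Prop) (y : X) : Prop :=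
  forall eps, eps > 0 -> exists c, C c /\ norm (vsub y c) < eps.

Definition is_proj (C : X -> Prop) (x p : X) : Prop :=
  C p /\ forall c, C c -> norm (vsub x p) <= norm (vsub x c).

Definition Fix (S : X -> X) (x : X) : Prop := S x = x.

(* (v + T) x := v + T x  and  T_{-v} x := T (x + v) *)
Definition shift_out (v : X) (T : X -> X) : X -> X := fun x => vadd X v (T x).
Definition shift_in (v : X) (T : X -> X) : X -> X := fun x => T (vadd X x v).

Definition rec (C : X -> Prop) (x : X) : Prop := forall c, C c -> C (vadd X x c).

Definition Fejer (y : nat -> X) (C : X -> Prop) : Prop :=
  forall c, C c -> forall n, norm (vsub (y (S n)) c) <= norm (vsub (y n) c).

Definition iterT (T : X -> X) (n : nat) (x : X) : X := Nat.iter n T x.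
End Ops.
Arguments vsub {X}. Arguments norm {X}. Arguments nonexpansive {X}. Arguments ran_IdT {X}.
Arguments closure {X}. Arguments is_proj {X}. Arguments Fix {X}. Arguments shift_out {X}.
Arguments shift_in {X}. Arguments rec {X}. Arguments Fejer {X}. Arguments iterT {X}.

(* Let y be a fixed point of v + T, so T y = y - v, and let z := y - t v with
   0 <= t < 1.  Nonexpansiveness gives |T z - T y| <= t |v|, while minimality
   of v in the closure of ran (Id - T) gives |z - T z| >= |v|.  Expanding the
   second inequality with T z = T y + w forces <v, w> <= - t |v|^2, and then
   |w + t v|^2 <= 0, i.e. T z = z - v.  Iterating in steps of 1/2, the whole
   ray y - R+ v lies in Fix (v + T), so T (y - n v) = y - (n+1) v: the orbit of
   y under T runs down the ray.  Every item of the proposition is a consequence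
   of this, using that x is fixed by T_{-v} exactly when x + v is fixed by v + T. *)
From Stdlib Require Import Reals Lra Psatz.
Open Scope R_scope.
Set Implicit Arguments.

Section InnerProduct.
Variable X : HilbertSpace.

Lemma inner_zero_l (y : X) : inner X (vzero X) y = 0.
Proof.
  assert (H := inner_add_l X (vzero X) (vzero X) y).
  rewrite vadd_0 in H. lra.
Qed.

Lemma inner_opp_l (x y : X) : inner X (vopp X x) y = - inner X x y.
Proof.
  assert (H := inner_add_l X x (vopp X x) y).
  rewrite vadd_opp, inner_zero_l in H. lra.
Qed.

Lemma inner_add_r (x y z : X) : inner X x (vadd X y z) = inner X x y + inner X x z.
Proof. rewrite !(inner_sym X x), inner_add_l; reflexivity. Qed.

Lemma inner_scal_r a (x y : X) : inner X x (vscal X a y) = a * inner X x y.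
Proof. rewrite !(inner_sym X x), inner_scal_l; reflexivity. Qed.

Lemma inner_opp_r (x y : X) : inner X x (vopp X y) = - inner X x y.
Proof. rewrite !(inner_sym X x), inner_opp_l; reflexivity. Qed.

Lemma inner_zero_r (y : X) : inner X y (vzero X) = 0.
Proof. rewrite inner_sym; apply inner_zero_l. Qed.

Lemma eq_of_inner_vsub_self (p q : X) : inner X (vsub p q) (vsub p q) = 0 -> p = q.
Proof.
  intro H. apply inner_def in H. unfold vsub in H.
  rewrite <- (vadd_0 X q), <- H, (vadd_comm X p), vadd_assoc, vadd_opp,
    vadd_comm, vadd_0.
  reflexivity.
Qed.

Lemma norm_le_sq (x y : X) : norm x <= norm y -> inner X x x <= inner X y y.
Proof. apply sqrt_le_0; apply inner_pos. Qed.

End InnerProduct.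

Arguments norm_le_sq {X x y}.


Ltac expand_inner :=
  unfold vsub;
  repeat progress rewrite ?inner_add_l, ?inner_add_r, ?inner_scal_l, ?inner_scal_r,
    ?inner_opp_l, ?inner_opp_r, ?inner_zero_l, ?inner_zero_r.

Ltac sort_inner := repeat match goal with |- context [inner ?X ?a ?b] =>
  match goal with |- context [inner X b a] =>
    tryif constr_eq a b then fail else rewrite (inner_sym X b a) end end.

(* The vector axioms come with no normalisation tactic, so an identity p = q
   of vectors is proved as |p - q|^2 = 0, an identity of reals in the inner
   products of the atoms, which [ring] decides. *)
Ltac vector_eq :=
  apply eq_of_inner_vsub_self; expand_inner; sort_inner; rewrite ?S_INR; ring.

Section ShiftedFixedPoints.
Variable X : HilbertSpace.
Variable T : X -> X.
Variable v : X.

Lemma fix_shift_out_eq (y : X) : Fix (shift_out v T) y -> T y = vsub y v.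
Proof. unfold Fix, shift_out. intro H. rewrite <- H at 2. vector_eq. Qed.

Lemma fix_shift_in_shift_out (x : X) :
  Fix (shift_in v T) x -> Fix (shift_out v T) (vadd X x v).
Proof. unfold Fix, shift_in, shift_out. intro H. rewrite H. apply vadd_comm. Qed.

Definition runs_down_ray (c : X) : Prop :=
  forall n : nat, T (vsub c (vscal X (INR n) v)) = vsub c (vscal X (INR (S n)) v).

Lemma iterT_runs_down_ray (c : X) (n : nat) :
  runs_down_ray c -> iterT T n c = vsub c (vscal X (INR n) v).
Proof.
  intro Hc. induction n as [|n IH].
  - simpl. vector_eq.
  - unfold iterT in *. simpl Nat.iter. rewrite IH. apply Hc.
Qed.

Lemma fejer_runs_down_ray (c x : X) : nonexpansive T -> runs_down_ray c ->
  forall n, norm (vsub (vadd X (iterT T (S n) x) (vscal X (INR (S n)) v)) c)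
        <= norm (vsub (vadd X (iterT T n x) (vscal X (INR n) v)) c).
Proof.
  intros HT Hc n. unfold iterT. simpl Nat.iter. fold (iterT T n x).
  set (p := iterT T n x).
  assert (H := HT p (vsub c (vscal X (INR n) v))). rewrite Hc in H.
  replace (norm (vsub (vadd X (T p) (vscal X (INR (S n)) v)) c))
    with (norm (vsub (T p) (vsub c (vscal X (INR (S n)) v)))).
  replace (norm (vsub (vadd X p (vscal X (INR n) v)) c))
    with (norm (vsub p (vsub c (vscal X (INR n) v)))).
  - exact H.
  - unfold norm. f_equal. expand_inner. sort_inner. ring.
  - unfold norm. f_equal. expand_inner. sort_inner. ring.
Qed.

Hypothesis HT : nonexpansive T.
Hypothesis Hv : is_proj (closure (ran_IdT T)) (vzero X) v.

Lemma inner_self_le_displacement (z : X) :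
  inner X v v <= inner X (vsub z (T z)) (vsub z (T z)).
Proof.
  destruct Hv as [_ Hmin].
  assert (Hz : closure (ran_IdT T) (vsub z (T z))).
  { intros e He. exists (vsub z (T z)). split; [exists z; reflexivity |].
    unfold norm. replace (inner X _ _) with 0; [rewrite sqrt_0; lra |].
    expand_inner. ring. }
  specialize (Hmin _ Hz). apply norm_le_sq in Hmin.
  revert Hmin. expand_inner. lra.
Qed.

Lemma fix_shift_out_sub_lt1 (y : X) (t : R) : 0 <= t < 1 ->
  Fix (shift_out v T) y -> Fix (shift_out v T) (vsub y (vscal X t v)).
Proof.
  intros Ht Hy. unfold Fix, shift_out in *.
  assert (Hne := norm_le_sq (HT (vsub y (vscal X t v)) y)).
  assert (Hmin := inner_self_le_displacement (vsub y (vscal X t v))).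
  set (a := T (vsub y (vscal X t v))) in *. set (b := T y) in *. clearbody a b.
  apply eq_of_inner_vsub_self, Rle_antisym; [| apply inner_pos].
  rewrite <- Hy in *. revert Hne Hmin. expand_inner. sort_inner. intros Hne Hmin.
  set (vv := inner X v v) in *. set (aa := inner X a a) in *.
  set (bb := inner X b b) in *. set (va := inner X v a) in *.
  set (vb := inner X v b) in *. set (ab := inner X a b) in *.
  assert (Hvv : 0 <= vv) by apply inner_pos.
  (* <v, T z - T y> <= - t |v|^2, multiplied through by (1 - t) |v|^2 *)
  assert (Hdir : vv * (1 - t) * (va - vb + t * vv) <= 0) by nra.
  nra.
Qed.

Lemma fix_shift_out_sub_le_half_nat (n : nat) : forall (y : X) (t : R),
  0 <= t <= INR n / 2 -> Fix (shift_out v T) y ->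
  Fix (shift_out v T) (vsub y (vscal X t v)).
Proof.
  induction n as [|n IH]; intros y t Ht Hy.
  - apply fix_shift_out_sub_lt1; auto. simpl in Ht. lra.
  - destruct (Rle_lt_dec t (1/2)) as [Hle | Hgt].
    + apply fix_shift_out_sub_lt1; auto. lra.
    + replace (vsub y (vscal X t v))
        with (vsub (vsub y (vscal X (1/2) v)) (vscal X (t - 1/2) v)) by vector_eq.
      apply IH; [rewrite S_INR in Ht; lra |].
      apply fix_shift_out_sub_lt1; auto. lra.
Qed.

Lemma fix_shift_out_sub (y : X) (t : R) : 0 <= t ->
  Fix (shift_out v T) y -> Fix (shift_out v T) (vsub y (vscal X t v)).
Proof.
  intros Ht Hy. destruct (INR_archimed (1/2) t) as [n Hn]; [lra |].
  apply (fix_shift_out_sub_le_half_nat n); auto. lra.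
Qed.

Lemma fix_shift_out_runs_down_ray (y : X) :
  Fix (shift_out v T) y -> runs_down_ray y.
Proof.
  intros Hy n.
  rewrite (fix_shift_out_eq (fix_shift_out_sub (pos_INR n) Hy)). vector_eq.
Qed.

Lemma fix_shift_in_runs_down_ray (x : X) :
  Fix (shift_in v T) x -> runs_down_ray x.
Proof.
  intros Hx n.
  assert (H := fix_shift_out_runs_down_ray (fix_shift_in_shift_out Hx) (S n)).
  replace (vsub (vadd X x v) (vscal X (INR (S n)) v))
    with (vsub x (vscal X (INR n) v)) in H by vector_eq.
  rewrite H. vector_eq.
Qed.

End ShiftedFixedPoints.

Theorem proposition2p4 (X : HilbertSpace) (T : X -> X) (v y0 : X) :
  nonexpansive T ->
  is_proj (closure (ran_IdT T)) (vzero X) v ->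
  ran_IdT T v ->
  Fix (shift_out v T) y0 ->
  (* (i) *)
  (forall t, 0 <= t -> Fix (shift_out v T) (vsub y0 (vscal X t v))) /\
  (* (ii) *)
  (forall y, (exists y' t, Fix (shift_out v T) y' /\ 0 <= t /\ y = vsub y' (vscal X t v))
             <-> Fix (shift_out v T) y) /\
  (* (iii) *)
  (forall t, 0 <= t -> rec (Fix (shift_out v T)) (vopp X (vscal X t v))) /\
  (* (iv) *)
  (forall n : nat, iterT T n y0 = vsub y0 (vscal X (INR n) v)) /\
  (* (v) *)
  (forall t x, t <= 1 -> Fix (shift_in v T) x ->
     Fix (shift_out v T) (vadd X (vscal X t v) x)) /\
  (forall x, Fix (shift_in v T) x -> Fix (shift_out v T) x) /\
  (* (vi) *)
  (forall x : X,
     Fejer (fun n => vadd X (iterT T n x) (vscal X (INR n) v)) (Fix (shift_out v T)) /\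
     Fejer (fun n => vadd X (iterT T n x) (vscal X (INR n) v)) (Fix (shift_in v T))) /\
  (* (vii) *)
  (forall x0, Fix (shift_in v T) x0 ->
     forall n : nat, iterT T n x0 = vsub x0 (vscal X (INR n) v) /\
                     Fix (shift_in v T) (iterT T n x0)).
Proof.
  (* v \in ran (Id - T) is implied by Fix (v + T) y0, hence unused. *)
  intros HT Hv _ Hy0.
  assert (Hin_out : forall t x, t <= 1 -> Fix (shift_in v T) x ->
            Fix (shift_out v T) (vadd X (vscal X t v) x)).
  { intros t x Ht Hx.
    replace (vadd X (vscal X t v) x) with (vsub (vadd X x v) (vscal X (1 - t) v))
      by vector_eq.
    apply fix_shift_out_sub; auto; [lra | apply fix_shift_in_shift_out; auto]. }
  split; [| split; [| split; [| split; [| split; [| split; [| split]]]]]].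
  - intros t Ht. apply fix_shift_out_sub; auto.
  - intro y. split.
    + intros [y' [t [Hy' [Ht ->]]]]. apply fix_shift_out_sub; auto.
    + intro Hy. exists y, 0. repeat split; auto; [lra | vector_eq].
  - intros t Ht c Hc.
    replace (vadd X (vopp X (vscal X t v)) c) with (vsub c (vscal X t v)) by vector_eq.
    apply fix_shift_out_sub; auto.
  - intro n. apply iterT_runs_down_ray, fix_shift_out_runs_down_ray; auto.
  - exact Hin_out.
  - intros x Hx. replace x with (vadd X (vscal X 0 v) x) by vector_eq.
    apply Hin_out; auto; lra.
  - intro x. split; intros c Hc; apply fejer_runs_down_ray; auto.
    + apply fix_shift_out_runs_down_ray; auto.
    + apply fix_shift_in_runs_down_ray; auto.
  - intros x0 Hx0 n.
    rewrite (iterT_runs_down_ray n (fix_shift_in_runs_down_ray HT Hv Hx0)).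
    split; [reflexivity |].
    unfold Fix, shift_in.
    replace (vadd X (vsub x0 (vscal X (INR n) v)) v)
      with (vsub (vadd X x0 v) (vscal X (INR n) v)) by vector_eq.
    rewrite (fix_shift_out_runs_down_ray HT Hv (fix_shift_in_shift_out Hx0) n).
    vector_eq.
Qed.
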